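(* For every integer $n\geq 8$, $$\dot{\imath}_{[1,2]}(P_8\Box P_n)=\begin{cases} 16 & \text{if } n=8,\\ \left\lfloor \frac{15n+16}{8}\right\rfloor & \text{otherwise.}\end{cases}$$
   Context: $P_k$ denotes the path on $k$ vertices and $P_m\Box P_n$ the Cartesian product of two paths (the $m\times n$ grid graph). A set $S$ of vertices of a graph $G$ is independent if no two vertices of $S$ are adjacent, and dominating if every vertex not in $S$ has at least one neighbor in $S$. An independent $[1,2]$-set of $G$ is an independent dominating set $S$ such that every vertex $v\in V(G)\setminus S$ has at least one and at most two neighbors in $S$. When $G$ has an independent $[1,2]$-set, $\dot{\imath}_{[1,2]}(G)$ denotes the minimum cardinality of an independent $[1,2]$-set of $G$ (the statement includes the existence of such a set). *)

From mathcomp Require Import all_boot.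
Set Implicit Arguments. Unset Strict Implicit. Unset Printing Implicit Defensive.

Definition independent (T : finType) (adj : rel T) (S : {set T}) : Prop :=
  forall x y, x \in S -> y \in S -> ~~ adj x y.

Definition dominating (T : finType) (adj : rel T) (S : {set T}) : Prop :=
  forall v, v \notin S -> exists2 u, u \in S & adj v u.

Definition indep12_set (T : finType) (adj : rel T) (S : {set T}) : Prop :=
  [/\ independent adj S, dominating adj S &
      forall v, v \notin S -> 1 <= #|[set u in S | adj v u]| <= 2].

Definition indep12_number_is (T : finType) (adj : rel T) (k : nat) : Prop :=
  (exists2 S : {set T}, indep12_set adj S & #|S| = k) /\
  (forall S : {set T}, indep12_set adj S -> k <= #|S|).

Definition grid_adj (m n : nat) : rel ('I_m * 'I_n) :=
  fun x y =>
    ((val x.1 == val y.1) && (((val x.2).+1 == val y.2) || ((val y.2).+1 == val x.2)))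
    || ((val x.2 == val y.2) && (((val x.1).+1 == val y.1) || ((val y.1).+1 == val x.1))).

From mathcomp Require Import all_boot zify.
Set Implicit Arguments. Unset Strict Implicit. Unset Printing Implicit Defensive.

(* Read an independent [1,2]-set of P_m [] P_n column by column: each column
   is a 0/1 word of length m, and every defining condition at a vertex only
   involves its own column and the two adjacent ones.  The minimum weight of a
   configuration of k columns ending with a given pair of columns therefore
   obeys a min-plus recurrence in k (a transfer matrix indexed by pairs of
   independent columns).  For m = 8 the table for 26 columns is the table for
   18 columns plus 15, so the optimum grows by 15 every 8 columns from n = 18
   on; the optimum for 8 <= n < 26 is read off the tables. *)

(* [None] plays the role of +oo. *)
Definition omin2 (x y : option nat) : option nat :=
  match x, y with
  | Some a, Some b => Some (minn a b)
  | Some _, None => x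
  | None, _ => y
  end.

Definition omin (l : seq (option nat)) : option nat := foldr omin2 None l.

Lemma omin_le l x : Some x \in l -> exists2 y, omin l = Some y & y <= x.
Proof.
elim: l => //= z l IH; rewrite in_cons => /orP [/eqP <-|/IH [y -> le_yx]].
  case: (omin l) => [y|] /=; last by exists x.
  by exists (minn x y); rewrite ?geq_minl.
case: z => [z|] /=; last by exists y.
by exists (minn z y); rewrite // geq_min le_yx orbT.
Qed.

Lemma omin_mem l y : omin l = Some y -> Some y \in l.
Proof.
elim: l y => //= z l IH y; case: z => [z|] /=; last by move/IH; rewrite in_cons orbC => ->.
case E: (omin l) => [w|] /= [<-]; rewrite in_cons; last by rewrite eqxx.
by rewrite /minn; case: ifP => _; rewrite ?eqxx // (IH _ E) orbT.
Qed.

Lemma omin_shift k l :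
  omin (map (omap (addn^~ k)) l) = omap (addn^~ k) (omin l).
Proof.
elim: l => //= z l ->; case: z => [z|]; case: (omin l) => [w|] //=.
by rewrite addn_minl.
Qed.

Fixpoint bitseqs k : seq (seq bool) :=
  if k is k'.+1 then [seq b :: s | b <- [:: true; false], s <- bitseqs k'] else [:: [::]].

Lemma mem_bitseqs k s : (s \in bitseqs k) = (size s == k).
Proof.
elim: k s => [|k IH] s; first by case: s.
apply/allpairsP/idP => [[[b' s'] /= [_ s'in ->]]|]; first by rewrite /= eqSS -IH.
by case: s => [|b s] //= size_s; exists (b, s); split => //=; [case: b | rewrite IH].
Qed.

Lemma uniq_bitseqs k : uniq (bitseqs k).
Proof.
elim: k => // k IH; apply: allpairs_uniq => // -[b s] [b' s'] _ _ /=.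
by case=> -> ->.
Qed.

Lemma zip_mapr (S T U : Type) (f : T -> U) (s : seq S) (t : seq T) :
  zip s (map f t) = [seq (x.1, f x.2) | x <- zip s t].
Proof. by elim: s t => [|x s IH] [|y t] //=; rewrite IH. Qed.

Definition bit (c : seq bool) (r : nat) : bool := nth false c r.

Definition weight (c : seq bool) : nat := count id c.

Section ColumnTransfer.

Variable m : nat.

Definition empty_col : seq bool := nseq m false.

Definition nbr_count (p c x : seq bool) (r : nat) : nat :=
  bit p r + bit x r + bit c r.+1 + ((0 < r) && bit c r.-1).

(* p and x are the columns before and after c.  Independence is only checked
   towards row r.+1 and column x: the other two directions are checked at the
   neighbouring cells. *)
Definition cell_ok (p c x : seq bool) (r : nat) : bool :=
  [&& ~~ (bit c r && bit c r.+1), ~~ (bit c r && bit x r) &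
      bit c r || (0 < nbr_count p c x r <= 2)].

Definition col_ok (p c x : seq bool) : bool := all (cell_ok p c x) (iota 0 m).

Definition indep_col (c : seq bool) : bool :=
  all (fun r => ~~ (bit c r && bit c r.+1)) (iota 0 m).

Definition cols : seq (seq bool) := [seq c <- bitseqs m | indep_col c].

Lemma col_okP p c x : reflect (forall r, r < m -> cell_ok p c x r) (col_ok p c x).
Proof.
by apply: (iffP allP) => ok r; [move=> r_lt_m | rewrite mem_iota => /andP [_]]; apply: ok;
  rewrite ?mem_iota.
Qed.

Lemma mem_cols c : (c \in cols) = (size c == m) && indep_col c.
Proof. by rewrite mem_filter mem_bitseqs andbC. Qed.

Lemma uniq_cols : uniq cols.
Proof. exact/filter_uniq/uniq_bitseqs. Qed.

Lemma bit_empty_col r : bit empty_col r = false.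
Proof. by rewrite /bit nth_nseq if_same. Qed.

Lemma col_ok_in_cols p c x : size c = m -> col_ok p c x -> c \in cols.
Proof.
move=> size_c /allP ok; rewrite mem_cols size_c eqxx.
by apply/allP => r /ok /and3P [].
Qed.

(* The tables are indexed by an enumeration [cs] of the independent columns,
   kept as a parameter rather than [cols] itself so that evaluation computes
   the enumeration once instead of at every lookup. *)
Variable cs : seq (seq bool).
Hypothesis mem_cs : forall c, (c \in cs) = (size c == m) && indep_col c.
Hypothesis uniq_cs : uniq cs.

Lemma empty_col_in_cs : empty_col \in cs.
Proof.
rewrite mem_cs size_nseq eqxx; apply/allP => r _.
by rewrite bit_empty_col.
Qed.

Definition table := seq (seq (option nat)).

(* Entry (a, b), stored in row [index b cs], is the least weight of a
   configuration whose last two columns are a and b, or [None] if there is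
   none. *)
Definition get (d : table) (a b : seq bool) : option nat :=
  nth None (nth [::] d (index b cs)) (index a cs).

Definition extend (a b c : seq bool) (v : option nat) : option nat :=
  if v is Some w then if col_ok a b c then Some (w + weight c) else None else None.

Definition relax (row : seq (option nat)) (b c : seq bool) : option nat :=
  omin [seq extend x.1 b c x.2 | x <- zip cs row].

Definition step (d : table) : table :=
  [seq [seq relax x.2 x.1 c | x <- zip cs d] | c <- cs].

Definition init : table :=
  [seq [seq (if a == empty_col then Some (weight b) else None) | a <- cs] | b <- cs].

Definition table_at (k : nat) : table := iter k.-1 step init.

Definition best (d : table) : option nat :=
  omin [seq (if col_ok a b empty_col then get d a b else None) | a <- cs, b <- cs].

Definition shift (k : nat) (d : table) : table := map (map (omap (addn^~ k))) d.

Definition square (d : table) : bool :=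
  (size d == size cs) && all (fun row => size row == size cs) d.

Lemma square_table_at k : square (table_at k).
Proof.
have square_init : square init.
  by rewrite /square size_map eqxx; apply/allP => _ /mapP [b _ ->]; rewrite size_map.
rewrite /table_at; elim: k.-1 => //= i /andP [/eqP size_d _].
rewrite /square size_map eqxx; apply/allP => _ /mapP [c _ ->].
by rewrite size_map size_zip size_d minnn.
Qed.

Lemma get_out d a b : square d -> (a \notin cs) || (b \notin cs) -> get d a b = None.
Proof.
case/andP => /eqP size_d /allP size_rows; rewrite /get -!index_mem -!leqNgt.
have [b_in|b_out] := ltnP (index b cs) (size d); last first.
  by rewrite (nth_default [::] b_out) nth_nil.
case/orP => [a_out|]; last by rewrite -size_d leqNgt b_in.
by rewrite (nth_default None) // (eqP (size_rows _ (mem_nth _ b_in))).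
Qed.

Lemma get_init a b : a \in cs -> b \in cs ->
  get init a b = if a == empty_col then Some (weight b) else None.
Proof. by move=> a_in b_in; rewrite /get !(nth_map [::], nth_index) ?index_mem. Qed.

Lemma get_step d b c : square d -> b \in cs -> c \in cs ->
  get (step d) b c = omin [seq extend a b c (get d a b) | a <- cs].
Proof.
case/andP => /eqP size_d /allP size_rows b_in c_in.
have b_lt : index b cs < size cs by rewrite index_mem.
rewrite /get (nth_map [::]) ?index_mem // nth_index //.
rewrite (nth_map (b, [::])) ?size_zip ?size_d ?minnn // nth_zip ?size_d //= nth_index //.
have size_row : size (nth [::] d (index b cs)) = size cs.
  by apply/eqP/size_rows/mem_nth; rewrite size_d.
rewrite /relax; congr omin; apply: (@eq_from_nth _ None).
  by rewrite !size_map size_zip size_row minnn.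
move=> i; rewrite size_map size_zip size_row minnn => i_lt.
rewrite (nth_map (b, None)) ?size_zip ?size_row ?minnn // nth_zip //.
by rewrite (nth_map b) // index_uniq // uniq_cs.
Qed.

Lemma get_shift k d a b : get (shift k d) a b = omap (addn^~ k) (get d a b).
Proof.
rewrite /get /shift.
have [b_lt|b_ge] := ltnP (index b cs) (size d); last by rewrite !nth_default ?size_map.
rewrite (nth_map [::]) //.
have [a_lt|a_ge] := ltnP (index a cs) (size (nth [::] d (index b cs))).
  by rewrite (nth_map None).
by rewrite nth_default ?size_map // nth_default.
Qed.

Lemma step_shift k d : step (shift k d) = shift k (step d).
Proof.
rewrite /step /shift zip_mapr -map_comp; apply: eq_map => c /=.
rewrite -map_comp -map_comp; apply: eq_map => -[b row] /=.
rewrite /relax zip_mapr -omin_shift -!map_comp; congr omin.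
apply: eq_map => -[a [v|]] //=; case: (col_ok a b c) => //=.
by rewrite addnAC.
Qed.

Lemma best_shift k d : best (shift k d) = omap (addn^~ k) (best d).
Proof.
rewrite /best -omin_shift map_allpairs; congr omin.
by apply: eq_allpairs => a b; rewrite get_shift; case: col_ok.
Qed.

Lemma table_atS k : 0 < k -> table_at k.+1 = step (table_at k).
Proof. by case: k. Qed.

Definition prev_col (h : nat -> seq bool) (j : nat) : seq bool :=
  if j is j'.+1 then h j' else empty_col.

Definition valid_prefix (h : nat -> seq bool) (k : nat) : Prop :=
  (forall j, j < k -> h j \in cs) /\
  (forall j, j.+1 < k -> col_ok (prev_col h j) (h j) (h j.+1)).

Lemma prev_col_in_cs h j : (forall i, i < j -> h i \in cs) -> prev_col h j \in cs.
Proof. by case: j => [_|j h_in]; [exact: empty_col_in_cs | apply: h_in]. Qed.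

Lemma prev_col_ext h h' j :
  (forall i, i < j -> h i = h' i) -> prev_col h j = prev_col h' j.
Proof. by case: j => //= j; apply. Qed.

Definition pad (h : nat -> seq bool) (k : nat) (x : seq bool) (j : nat) : seq bool :=
  if j < k then h j else x.

Lemma prev_col_pad h k x j : j <= k -> prev_col (pad h k x) j = prev_col h j.
Proof. by case: j => //= j j_lt; rewrite /pad j_lt. Qed.

Lemma sum_weight_pad h k x : \sum_(j < k) weight (pad h k x j) = \sum_(j < k) weight (h j).
Proof. by apply: eq_bigr => j _; rewrite /pad ltn_ord. Qed.

Lemma table_at_le k h : 0 < k -> valid_prefix h k ->
  exists2 v, get (table_at k) (prev_col h k.-1) (h k.-1) = Some v &
             v <= \sum_(j < k) weight (h j).
Proof.
elim: k => // -[_ _ [h_in _]|k IH _ [h_in h_ok]].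
  exists (weight (h 0)); last by rewrite big_ord1.
  by rewrite get_init ?empty_col_in_cs ?h_in ?eqxx.
have [|v get_v le_v] := IH isT; first by split=> j j_lt; [apply: h_in | apply: h_ok]; lia.
rewrite /= table_atS // get_step ?square_table_at ?h_in //.
have : Some (v + weight (h k.+1)) \in
    [seq extend a (h k) (h k.+1) (get (table_at k.+1) a (h k)) | a <- cs].
  apply/mapP; exists (prev_col h k); last by rewrite get_v /= h_ok.
  by apply: prev_col_in_cs => i i_lt; apply: h_in; lia.
case/omin_le => w -> le_w; exists w => //.
by rewrite big_ord_recr /= (leq_trans le_w) // leq_add2r.
Qed.

Lemma table_at_attained k a b v : 0 < k -> get (table_at k) a b = Some v ->
  exists h, [/\ valid_prefix h k, prev_col h k.-1 = a, h k.-1 = b &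
                \sum_(j < k) weight (h j) = v].
Proof.
elim: k a b v => // k IH a b v _.
have [a_in|a_out] := boolP (a \in cs); last by rewrite get_out ?square_table_at ?a_out.
have [b_in|b_out] := boolP (b \in cs); last by rewrite get_out ?square_table_at ?b_out ?orbT.
case: k IH => [_|k IH].
  rewrite get_init //; case: eqP => // -> [<-].
  by exists (fun=> b); split; rewrite ?big_ord1.
rewrite table_atS // get_step ?square_table_at // => /omin_mem /mapP [a' _].
rewrite /extend; case get_v': (get _ a' a) => [v'|] //; case: ifP => // ok [->].
have [h [[h_in h_ok] /= prev_h h_k <-]] := IH _ _ _ isT get_v'.
exists (pad h k.+1 b); split.
- split=> j j_lt; first by rewrite /pad; case: ifP => [/h_in|].
  rewrite ltnS in j_lt; rewrite prev_col_pad ?(ltnW j_lt) // /pad j_lt.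
  have [j_lt'|j_ge] := ltnP j.+1 k.+1; first exact: h_ok.
  have -> : j = k by lia.
  by rewrite prev_h h_k.
- by rewrite /= /pad ltnSn.
- by rewrite /= /pad ltnn.
- by rewrite big_ord_recr sum_weight_pad /= /pad ltnn.
Qed.

(* The columns from k on, like the column before column 0 (see [prev_col]), are
   empty: this is how the boundary of the grid enters the constraints. *)
Definition valid_config (h : nat -> seq bool) (k : nat) : Prop :=
  [/\ forall j, j < k -> h j \in cs,
      forall j, j < k -> col_ok (prev_col h j) (h j) (h j.+1) &
      forall j, k <= j -> h j = empty_col].

Lemma best_le k h v : 0 < k -> best (table_at k) = Some v -> valid_config h k ->
  v <= \sum_(j < k) weight (h j).
Proof.
move=> k_gt0 best_v [h_in h_ok h_out].
have [|w get_w le_w] := table_at_le k_gt0 (h := h).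
  by split=> // j j_lt; apply: h_ok; apply: ltnW.
have : Some w \in [seq (if col_ok a b empty_col then get (table_at k) a b else None)
                  | a <- cs, b <- cs].
  apply/allpairsP; exists (prev_col h k.-1, h k.-1); split => /=.
  - by apply: prev_col_in_cs => i i_lt; apply: h_in; lia.
  - by apply: h_in; lia.
  - by rewrite -(h_out k) // -{3}(prednK k_gt0) h_ok ?prednK // ltn_predL.
case/omin_le => u; rewrite -/(best _) best_v => -[<-] le_u.
exact: leq_trans le_w.
Qed.

Lemma best_attained k v : 0 < k -> best (table_at k) = Some v ->
  exists2 h, valid_config h k & \sum_(j < k) weight (h j) = v.
Proof.
move=> k_gt0 /omin_mem /allpairsP [[a b] /= [_ _]].
case: ifP => // ok /esym get_v.
have [h [[h_in h_ok] prev_a h_b <-]] := table_at_attained k_gt0 get_v.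
exists (pad h k empty_col); last exact: sum_weight_pad.
split=> j; first by move=> j_lt; rewrite /pad j_lt h_in.
- move=> j_lt; rewrite prev_col_pad ?(ltnW j_lt) // /pad j_lt.
  have [j_lt'|j_ge] := ltnP j.+1 k; first exact: h_ok.
  have -> : j = k.-1 by lia.
  by rewrite prev_a h_b.
- by rewrite /pad ltnNge => ->.
Qed.

Lemma nth_traject_step N i : i < N -> nth init (traject step init N) i = table_at i.+1.
Proof. by move=> i_lt; rewrite nth_traject. Qed.

End ColumnTransfer.

Lemma weight_mkseq (f : nat -> bool) k : weight (mkseq f k) = \sum_(i < k) f i.
Proof.
rewrite /weight /mkseq count_map -sum1_count big_mkcond.
rewrite -(big_mkord xpredT (fun i => nat_of_bool (f i))) /index_iota subn0.
by apply: eq_bigr => i _ /=; case: (f i).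
Qed.

(* The four neighbours of (r, j) are distinct, so adjacency is a sum of four
   indicators. *)
Lemma grid_adj_nat (r j a b : nat) :
  ((r == a) && ((j.+1 == b) || (b.+1 == j))) || ((j == b) && ((r.+1 == a) || (a.+1 == r))) =
  (a == r) && (b == j.+1) + (a == r.+1) && (b == j) +
  (0 < j) * ((a == r) && (b == j.-1)) + (0 < r) * ((a == r.-1) && (b == j)) :> nat.
Proof. by do !case: eqP => //= ?; lia. Qed.

Section GridColumns.

Variables m n : nat.
Implicit Types (S : {set 'I_m * 'I_n}) (u v : 'I_m * 'I_n).

Definition cell S (r j : nat) : bool := [exists u in S, (val u.1 == r) && (val u.2 == j)].

Definition column_of S (j : nat) : seq bool := mkseq (cell S ^~ j) m.

Definition set_of_columns (h : nat -> seq bool) : {set 'I_m * 'I_n} :=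
  [set u : 'I_m * 'I_n | bit (h u.2) u.1].

Lemma vertex_val_inj u w : val u.1 = val w.1 -> val u.2 = val w.2 -> u = w.
Proof. by case: u w => [x y] [x' y'] /= /val_inj -> /val_inj ->. Qed.

Lemma cellE S u : cell S (val u.1) (val u.2) = (u \in S).
Proof.
apply/existsP/idP => [[w /andP [wS /andP [/eqP w1 /eqP w2]]]|uS].
  by rewrite (@vertex_val_inj u w).
by exists u; rewrite uS !eqxx.
Qed.

Lemma cell_out S r j : (m <= r) || (n <= j) -> cell S r j = false.
Proof.
move=> out; apply/existsP => -[u /andP [_ /andP [/eqP u1 /eqP u2]]].
by case/orP: out; rewrite -?u1 -?u2 leqNgt ltn_ord.
Qed.

Lemma bit_column_of S j r : bit (column_of S j) r = cell S r j.
Proof.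
have [r_lt|r_ge] := ltnP r m; first by rewrite /bit nth_mkseq.
by rewrite /bit nth_default ?size_mkseq // cell_out ?r_ge.
Qed.

Lemma bit_prev_col S j r :
  bit (prev_col m (column_of S) j) r = (0 < j) && cell S r j.-1.
Proof. by case: j => [|j]; rewrite /= ?bit_empty_col ?bit_column_of. Qed.

Lemma column_of_out S j : n <= j -> column_of S j = empty_col m.
Proof.
move=> j_ge; apply: (@eq_from_nth _ false) => [|r _]; first by rewrite size_mkseq size_nseq.
change (bit (column_of S j) r = bit (empty_col m) r).
by rewrite bit_column_of bit_empty_col cell_out ?j_ge ?orbT.
Qed.

Lemma sum_cell S r j :
  \sum_u (u \in S) * ((val u.1 == r) && (val u.2 == j)) = cell S r j.
Proof.
case: (boolP (cell S r j)) => [/existsP [w /andP [wS /andP [/eqP w1 /eqP w2]]]|no_cell].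
  rewrite (bigD1 w) //= wS w1 w2 !eqxx big1 // => u u_neq_w.
  rewrite mulnb; apply/eqP; rewrite eqb0; apply/negP => /andP [_ /andP [/eqP u1 /eqP u2]].
  by move/eqP: u_neq_w; apply; apply: vertex_val_inj; [rewrite w1 | rewrite w2].
rewrite big1 // => u _; rewrite mulnb; apply/eqP; rewrite eqb0; apply: contra no_cell => u_rj.
by apply/existsP; exists u.
Qed.

Lemma card_nbrs S v :
  #|[set u in S | grid_adj v u]| =
  nbr_count (prev_col m (column_of S) v.2) (column_of S v.2) (column_of S v.2.+1) v.1.
Proof.
rewrite -sum1_card big_mkcond /=.
rewrite (eq_bigr (fun u => (u \in S) * grid_adj v u)) => [|u _]; last first.
  by rewrite inE; case: (u \in S); case: grid_adj.
under eq_bigr => u _ do rewrite /grid_adj grid_adj_nat !mulnDr !(mulnCA (u \in S) (0 < _)).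
rewrite !big_split -!big_distrr /= !sum_cell.
rewrite /nbr_count bit_prev_col !bit_column_of !mulnb.
lia.
Qed.

Lemma independent_cellsP S :
  independent (@grid_adj m n) S <->
  forall r j, ~~ (cell S r j && cell S r.+1 j) && ~~ (cell S r j && cell S r j.+1).
Proof.
split=> [indep r j|no_adj u w uS wS].
  apply/andP; split; apply/negP => /andP [/existsP [u /and3P [uS /eqP u1 /eqP u2]]];
    case/existsP => w /and3P [wS /eqP w1 /eqP w2];
    by move: (indep u w uS wS); rewrite /grid_adj u1 u2 w1 w2 !eqxx ?orbT.
rewrite -cellE in uS; rewrite -cellE in wS; apply/negP.
case/orP => /andP [/eqP e /orP [/eqP e'|/eqP e']].
- by move: (no_adj (val u.1) (val u.2)); rewrite uS e e' wS andbF.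
- by move: (no_adj (val w.1) (val w.2)); rewrite wS -e e' uS andbF.
- by move: (no_adj (val u.1) (val u.2)); rewrite uS e e' wS.
- by move: (no_adj (val w.1) (val w.2)); rewrite wS -e e' uS.
Qed.

Lemma indep12_setP S :
  indep12_set (@grid_adj m n) S <->
  forall j, j < n -> col_ok m (prev_col m (column_of S) j) (column_of S j) (column_of S j.+1).
Proof.
split=> [[/independent_cellsP indep _ nbrs] j j_lt|ok].
  apply/col_okP => r r_lt; rewrite /cell_ok !bit_column_of.
  have /andP [-> ->] := indep r j.
  have := nbrs (Ordinal r_lt, Ordinal j_lt); rewrite -cellE card_nbrs /=.
  by case: (cell S r j) => //= /(_ isT).
have cells_ok r j : r < m -> j < n ->
    cell_ok (prev_col m (column_of S) j) (column_of S j) (column_of S j.+1) r.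
  by move=> r_lt j_lt; move/col_okP: (ok j j_lt); apply.
have nbrs v : v \notin S -> 0 < #|[set u in S | grid_adj v u]| <= 2.
  move=> vS; have := cells_ok _ _ (ltn_ord v.1) (ltn_ord v.2).
  by rewrite /cell_ok card_nbrs bit_column_of cellE (negbTE vS) => /and3P [].
split=> //.
- apply/independent_cellsP => r j.
  have [r_lt|r_ge] := ltnP r m; last by rewrite cell_out ?r_ge.
  have [j_lt|j_ge] := ltnP j n; last by rewrite cell_out ?j_ge ?orbT.
  by have /and3P [] := cells_ok r j r_lt j_lt; rewrite !bit_column_of => -> ->.
- move=> v vS; have /andP [nbr_gt0 _] := nbrs v vS.
  have /set0Pn [u] : [set u in S | grid_adj v u] != set0 by rewrite -card_gt0.
  by rewrite inE => /andP [uS vu]; exists u.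
Qed.

Lemma card_columns S : #|S| = \sum_(j < n) weight (column_of S j).
Proof.
rewrite -sum1_card big_mkcond /= (eq_bigr (fun u => nat_of_bool (cell S u.1 u.2))).
  rewrite -(pair_bigA _ (fun (i : 'I_m) (j : 'I_n) => nat_of_bool (cell S i j))) exchange_big.
  by apply: eq_bigr => j _; rewrite weight_mkseq.
by move=> u _; rewrite cellE; case: (u \in S).
Qed.

Lemma column_of_set_of_columns h :
  valid_config m (cols m) h n -> column_of (set_of_columns h) =1 h.
Proof.
move=> [h_in _ h_out] j.
have [j_lt|j_ge] := ltnP j n; last by rewrite column_of_out ?h_out.
have size_h : size (h j) = m by move: (h_in j j_lt); rewrite mem_cols => /andP [/eqP].
apply: (@eq_from_nth _ false) => [|r]; rewrite size_mkseq // => r_lt.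
change (bit (column_of (set_of_columns h) j) r = bit (h j) r).
by rewrite bit_column_of (cellE _ (Ordinal r_lt, Ordinal j_lt)) inE.
Qed.

Lemma valid_config_column_of S :
  indep12_set (@grid_adj m n) S -> valid_config m (cols m) (column_of S) n.
Proof.
move/indep12_setP=> ok; split=> [j j_lt|j j_lt|j /column_of_out //]; last exact: ok.
exact: col_ok_in_cols (size_mkseq _ _) (ok j j_lt).
Qed.

Lemma indep12_set_of_columns h :
  valid_config m (cols m) h n -> indep12_set (@grid_adj m n) (set_of_columns h).
Proof.
move=> h_valid; have col_h := column_of_set_of_columns h_valid.
case: h_valid => _ h_ok _; apply/indep12_setP => j j_lt.
by rewrite !col_h (@prev_col_ext _ _ h) => [|i _]; [exact: h_ok | exact: col_h].
Qed.

Theorem indep12_number_best (v : nat) :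
  0 < n -> best m (cols m) (table_at m (cols m) n) = Some v ->
  indep12_number_is (@grid_adj m n) v.
Proof.
move=> n_gt0 best_v; split=> [|S /valid_config_column_of S_valid].
  have [h h_valid <-] := best_attained (uniq_cols m) n_gt0 best_v.
  exists (set_of_columns h); first exact: indep12_set_of_columns.
  by rewrite card_columns; apply: eq_bigr => j _; rewrite column_of_set_of_columns.
rewrite card_columns; exact: (best_le (mem_cols m) (uniq_cols m) n_gt0 best_v S_valid).
Qed.

End GridColumns.

Definition i12_P8 (k : nat) : nat := if k == 8 then 16 else (15 * k + 16) %/ 8.

(* Item k.-1 of [tables] stands for the table for k columns
   (see [nth_traject_step]). *)
Definition P8_certificate (cs : seq (seq bool)) (tables : seq table) : bool :=
  (nth (init 8 cs) tables 25 == shift 15 (nth (init 8 cs) tables 17)) &&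
  all (fun k => best 8 cs (nth (init 8 cs) tables k.-1) == Some (i12_P8 k)) (iota 8 18).

Lemma P8_certificate_ok :
  P8_certificate (cols 8) (traject (step 8 (cols 8)) (init 8 (cols 8)) 26).
Proof. by vm_compute. Qed.

Lemma table_at_P8_period j :
  table_at 8 (cols 8) (26 + j) = shift 15 (table_at 8 (cols 8) (18 + j)).
Proof.
elim: j => [|j IH].
  case/andP: P8_certificate_ok => /eqP + _.
  rewrite (nth_traject_step _ _ (isT : 25 < 26)) (nth_traject_step _ _ (isT : 17 < 26)).
  by rewrite !addn0.
rewrite !addnS (table_atS _ _ (isT : 0 < 26 + j)) (table_atS _ _ (isT : 0 < 18 + j)).
by rewrite IH step_shift.
Qed.

Lemma i12_P8_period j : i12_P8 (26 + j) = i12_P8 (18 + j) + 15.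
Proof.
rewrite /i12_P8; (case: eqP => [|_]; first lia); (case: eqP => [|_]; first lia).
have -> : 15 * (26 + j) + 16 = 15 * 8 + (15 * (18 + j) + 16) by lia.
by rewrite divnMDl // addnC.
Qed.

Lemma best_table_at_P8 k :
  8 <= k -> best 8 (cols 8) (table_at 8 (cols 8) k) = Some (i12_P8 k).
Proof.
elim/ltn_ind: k => k IH k_ge8.
have [k_lt|k_ge] := ltnP k 26.
  case/andP: P8_certificate_ok => _ /allP /(_ k).
  rewrite mem_iota k_ge8 (nth_traject_step _ _ (_ : k.-1 < 26)) ?prednK; try lia.
  by move=> /(_ k_lt) /eqP.
rewrite -(subnKC k_ge) table_at_P8_period best_shift IH; try lia.
by rewrite i12_P8_period.
Qed.

Unset Implicit Arguments.

Theorem mainTheorem9 (n : nat) (hn : 8 <= n) :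
  indep12_number_is (@grid_adj 8 n)
    (if n == 8 then 16 else (15 * n + 16) %/ 8).
Proof. exact: (indep12_number_best (leq_trans (isT : 0 < 8) hn) (best_table_at_P8 hn)). Qed.
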